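(* For all integers $M,N,p,r\ge1$: (1) $c_p^r(1,N)=N^{p-1}$; (2) $c_p^r(M,1)=M^{p-1}$; (3) $c_1^r(M,N)=1$; (4) $c_p^1(M,N)=(MN)^{p-1}$.
   Context: For integers $M,N,p,r\ge1$, consider triples $(i,a,b)$ with $i=(i_1,\dots,i_r)\in\mathbb Z_M^r$, $a=(a_1,\dots,a_p)\in\mathbb Z_M^p$, $b=(b_1,\dots,b_p)\in\mathbb Z_N^p$, with cyclic conventions $i_{r+1}=i_1$, $b_{p+1}=b_1$. For $x\in\{1,\dots,r\}$, condition $(E_x)$ says that the multisets $\{(i_x+a_y,b_y),(i_{x+1}+a_y,b_{y+1}):y=1,\dots,p\}$ and $\{(i_x+a_y,b_{y+1}),(i_{x+1}+a_y,b_y):y=1,\dots,p\}$ of elements of $\mathbb Z_M\times\mathbb Z_N$ (counted with multiplicity) coincide. Define $c_p^r(M,N)=\frac{1}{M^{r+1}N}\#\{(i,a,b):(E_x)\text{ holds for all }x\}$. *)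

From HB Require Import structures.
From mathcomp Require Import all_boot all_order all_algebra.
Set Implicit Arguments. Unset Strict Implicit. Unset Printing Implicit Defensive.
Import GRing.Theory Num.Theory.

(* Z_M is represented by 'I_M (values 0..M-1), with addition computed mod M;
   elements of Z_M x Z_N are represented as pairs of nats (canonical residues).
   The cyclic successor x+1 (with r+1 = 1) is ordS. *)

Definition triple (M N p r : nat) : finType :=
  ({ffun 'I_r -> 'I_M} * {ffun 'I_p -> 'I_M} * {ffun 'I_p -> 'I_N})%type.

Definition condE (M N p r : nat) (i : {ffun 'I_r -> 'I_M})
    (a : {ffun 'I_p -> 'I_M}) (b : {ffun 'I_p -> 'I_N}) (x : 'I_r) : bool :=
  let ix := nat_of_ord (i x) in
  let ix1 := nat_of_ord (i (ordS x)) in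
  perm_eq
    ([seq ((ix + a y) %% M, nat_of_ord (b y)) | y <- enum 'I_p] ++
     [seq ((ix1 + a y) %% M, nat_of_ord (b (ordS y))) | y <- enum 'I_p])
    ([seq ((ix + a y) %% M, nat_of_ord (b (ordS y))) | y <- enum 'I_p] ++
     [seq ((ix1 + a y) %% M, nat_of_ord (b y)) | y <- enum 'I_p]).

Definition count_c (M N p r : nat) : nat :=
  #|[pred t : triple M N p r | [forall x : 'I_r, condE t.1.1 t.1.2 t.2 x]]|.

Definition c_pr (p r M N : nat) : rat :=
  ((count_c M N p r)%:R / ((M ^ r.+1 * N)%N)%:R)%R.

(* In each of the four degenerate cases every triple (i, a, b) satisfies all
   the conditions (E_x): for M = 1 the first coordinates all vanish, for
   N = 1 the second ones do, for p = 1 we have b_(y+1) = b_y, and for r = 1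
   we have i_(x+1) = i_x; in each case the two multisets are the same lists
   up to swapping the two halves. *)
From HB Require Import structures.
From mathcomp Require Import all_boot all_order all_algebra.
From mathcomp Require Import ring.
Import GRing.Theory Num.Theory.
Local Open Scope ring_scope.

Lemma perm_eq_cat_map (T : eqType) (I : Type) (s : seq I) (f g h k : I -> T) :
  f =1 h -> g =1 k -> perm_eq (map f s ++ map g s) (map h s ++ map k s).
Proof. by move=> fh gk; rewrite (eq_map fh) (eq_map gk). Qed.

Lemma perm_eq_cat_map_swap (T : eqType) (I : Type) (s : seq I)
    (f g h k : I -> T) :
  f =1 k -> g =1 h -> perm_eq (map f s ++ map g s) (map h s ++ map k s).
Proof. by move=> fk gh; rewrite (eq_map fk) (eq_map gh) perm_catC. Qed.

Section AllTriplesAdmissible.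

Variables M N p r : nat.
Hypothesis condE_all : forall i a b x, @condE M N p r i a b x.

Lemma count_c_all : count_c M N p r = (M ^ r * M ^ p * N ^ p)%N.
Proof.
rewrite /count_c (@eq_card _ _ predT) => [|t]; last first.
  by rewrite !inE; apply/forallP.
by rewrite cardT -cardE !card_prod !card_ffun !card_ord.
Qed.

Lemma c_pr_all : (0 < M)%N -> (0 < N)%N -> (0 < p)%N ->
  c_pr p r M N = ((M * N) ^ p.-1)%N%:R.
Proof.
case: p count_c_all => // q count_all M_gt0 N_gt0 _.
have count_split : (M ^ r * M ^ q.+1 * N ^ q.+1 =
    (M * N) ^ q * (M ^ r.+1 * N))%N.
  by rewrite expnMn !expnS; ring.
rewrite /c_pr count_all count_split natrM mulfK //.
by rewrite pnatr_eq0 -lt0n muln_gt0 expn_gt0 M_gt0.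
Qed.

End AllTriplesAdmissible.

Arguments c_pr_all {M N p r}.

Lemma condE_M1 N p r i a b x : @condE 1 N p r i a b x.
Proof. by apply: perm_eq_cat_map_swap => y; rewrite !modn1. Qed.

Lemma condE_N1 M p r i a b x : @condE M 1 p r i a b x.
Proof. by apply: perm_eq_cat_map => y; rewrite [b y]ord1 [b _]ord1. Qed.

Lemma condE_p1 M N r i a b x : @condE M N 1 r i a b x.
Proof. by apply: perm_eq_cat_map => y; rewrite [ordS y]ord1 [y]ord1. Qed.

Lemma condE_r1 M N p i a b x : @condE M N p 1 i a b x.
Proof. by apply: perm_eq_cat_map_swap => y; rewrite [ordS x]ord1 [x]ord1. Qed.

Theorem proposition3p1 (M N p r : nat) :
  (1 <= M)%N -> (1 <= N)%N -> (1 <= p)%N -> (1 <= r)%N ->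
  [/\ c_pr p r 1 N = ((N ^ p.-1)%N)%:R,
      c_pr p r M 1 = ((M ^ p.-1)%N)%:R,
      c_pr 1 r M N = 1%R
    & c_pr p 1 M N = (((M * N) ^ p.-1)%N)%:R].
Proof.
move=> M_gt0 N_gt0 p_gt0 _; split.
- by rewrite (c_pr_all (condE_M1 _ _ _)) // mul1n.
- by rewrite (c_pr_all (condE_N1 _ _ _)) // muln1.
- by rewrite (c_pr_all (condE_p1 _ _ _)).
- by rewrite (c_pr_all (condE_r1 _ _ _)).
Qed.
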